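(* Let $E$ be a non-trivial locally convex space such that $(E,\sigma(E,E'))$ is a $\sigma$-space. Then: (i) $(E,\sigma(E,E'))$ admits a weaker separable metrizable locally convex topology; (ii) $(E,\sigma(E,E'))$ has countable pseudocharacter and $|E|=\mathfrak c$; (iii) $(E',\sigma(E',E))$ is separable.
   Context: A $\sigma$-space is a regular space having a $\sigma$-locally finite network, where a network is a family $\mathcal N$ of sets such that every open $U$ and $x\in U$ admit $N\in\mathcal N$ with $x\in N\subset U$. Countable pseudocharacter means every point is the intersection of countably many of its open neighbourhoods. *)

From Stdlib Require Import Reals List.
Open Scope R_scope.

Section Topology.
Variable X : Type.
Variable open : (X -> Prop) -> Prop.

Definition is_topology : Prop :=
  open (fun _ => True) /\
  (forall U V, open U -> open V -> open (fun x => U x /\ V x)) /\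
  (forall F : (X -> Prop) -> Prop, (forall U, F U -> open U) ->
     open (fun x => exists U, F U /\ U x)).

Definition closed (C : X -> Prop) : Prop := open (fun x => ~ C x).

Definition hausdorff : Prop :=
  forall x y, x <> y -> exists U V, open U /\ open V /\ U x /\ V y /\
    (forall z, U z -> V z -> False).

Definition regular : Prop :=
  forall (C : X -> Prop) x, closed C -> ~ C x ->
    exists U V, open U /\ open V /\ U x /\ (forall y, C y -> V y) /\
      (forall z, U z -> V z -> False).

Definition network (N : (X -> Prop) -> Prop) : Prop :=
  forall U x, open U -> U x -> exists A, N A /\ A x /\ (forall y, A y -> U y).

Definition locally_finite (N : (X -> Prop) -> Prop) : Prop :=
  forall x, exists U, open U /\ U x /\
    exists l : list (X -> Prop),
      forall A, N A -> (exists y, U y /\ A y) -> In A l.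

Definition sigma_locally_finite (N : (X -> Prop) -> Prop) : Prop :=
  exists Ns : nat -> (X -> Prop) -> Prop,
    (forall n, locally_finite (Ns n)) /\ (forall A, N A <-> exists n, Ns n A).

Definition sigma_space : Prop :=
  regular /\ exists N, network N /\ sigma_locally_finite N.

Definition countable_pseudocharacter : Prop :=
  forall x, exists Us : nat -> X -> Prop,
    (forall n, open (Us n) /\ Us n x) /\ (forall y, (forall n, Us n y) -> y = x).

(* separable: has a countable dense subset (enumerated by a sequence;
   the spaces considered here are nonempty) *)
Definition separable : Prop :=
  exists d : nat -> X, forall U, open U -> (exists x, U x) -> exists n, U (d n).

Definition is_metric (d : X -> X -> R) : Prop :=
  (forall x y, d x y = 0 <-> x = y) /\ (forall x y, d x y = d y x) /\
  (forall x y z, d x z <= d x y + d y z).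

Definition metrizable : Prop :=
  exists d : X -> X -> R, is_metric d /\
    forall U, open U <-> (forall x, U x -> exists eps, 0 < eps /\
                                  forall y, d x y < eps -> U y).
End Topology.

Definition initial_open (I X : Type) (F : I -> X -> R) (W : X -> Prop) : Prop :=
  forall x, W x -> exists (l : list I) (eps : R), 0 < eps /\
    forall y, (forall i, In i l -> Rabs (F i y - F i x) < eps) -> W y.

Record vspace := VSpace {
  vcar :> Type;
  vzero : vcar;
  vadd : vcar -> vcar -> vcar;
  vopp : vcar -> vcar;
  vscal : R -> vcar -> vcar;
  vaddA : forall x y z, vadd x (vadd y z) = vadd (vadd x y) z;
  vaddC : forall x y, vadd x y = vadd y x;
  vadd0 : forall x, vadd x vzero = x;
  vaddN : forall x, vadd x (vopp x) = vzero;
  vscalA : forall a b x, vscal a (vscal b x) = vscal (a * b) x;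
  vscal1 : forall x, vscal 1 x = x;
  vscalDr : forall a x y, vscal a (vadd x y) = vadd (vscal a x) (vscal a y);
  vscalDl : forall a b x, vscal (a + b) x = vadd (vscal a x) (vscal b x)
}.

Section LCS.
Variable V : vspace.

Definition convex (U : V -> Prop) : Prop :=
  forall x y t, 0 <= t <= 1 -> U x -> U y ->
    U (vadd V (vscal V t x) (vscal V (1 - t) y)).

Definition lc_topology (open : (V -> Prop) -> Prop) : Prop :=
  is_topology V open /\ hausdorff V open /\
  (forall x y W, open W -> W (vadd V x y) ->
     exists U1 U2, open U1 /\ open U2 /\ U1 x /\ U2 y /\
       forall a b, U1 a -> U2 b -> W (vadd V a b)) /\
  (forall r x W, open W -> W (vscal V r x) ->
     exists delta U, 0 < delta /\ open U /\ U x /\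
       forall s y, Rabs (s - r) < delta -> U y -> W (vscal V s y)) /\
  (forall W, open W -> W (vzero V) ->
     exists U, open U /\ U (vzero V) /\ convex U /\ forall y, U y -> W y).

Definition linear (f : V -> R) : Prop :=
  (forall x y, f (vadd V x y) = f x + f y) /\
  (forall a x, f (vscal V a x) = a * f x).

Definition continuous (open : (V -> Prop) -> Prop) (f : V -> R) : Prop :=
  forall x eps, 0 < eps -> exists U, open U /\ U x /\
    forall y, U y -> Rabs (f y - f x) < eps.

Definition dual (open : (V -> Prop) -> Prop) : Type :=
  { f : V -> R | linear f /\ continuous open f }.

Definition weak_open (open : (V -> Prop) -> Prop) : (V -> Prop) -> Prop :=
  initial_open (dual open) V (fun f x => proj1_sig f x).

Definition weakstar_open (open : (V -> Prop) -> Prop) : (dual open -> Prop) -> Prop :=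
  initial_open V (dual open) (fun x f => proj1_sig f x).
End LCS.

(* Hahn-Banach makes sigma(E,E') Hausdorff, in particular T1. In a regular T1
   space with a sigma-locally finite network N = U_n N_n, the sets
   O_n(x) = {y | x is in the closure of every A in N_n whose closure contains y}
   are open neighbourhoods of x with intersection {x}, so sigma(E,E') has
   countable pseudocharacter. Each O_n(0) contains a basic weak neighbourhood
   given by finitely many functionals; together these form a sequence (phi_k)
   in E' separating the points of E, and everything follows from it:
   - the initial topology of (phi_k) is a weaker locally convex topology; it is
     separable and metrizable because it is generated by countably many real
     functions;
   - x |-> (phi_k x)_k injects E into R^N, which injects into R, while
     t |-> t x0 injects R into E, so |E| = c by Cantor-Bernstein;
   - a linear form agrees on any finite set with a linear combination of the
     phi_k, so the combinations with rational coefficients are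
     sigma(E',E)-dense in E'. *)

From Pilot Require Import Defs.
From Stdlib Require Import Reals List Lra Lia ZArith Classical ClassicalEpsilon Cantor
  FunctionalExtensionality PropExtensionality.
From mathcomp Require all_boot boolp classical_sets functions cardinality Rstruct Rstruct_topology.
Open Scope R_scope.

(* Grid points [(a, b, m)] stand for the rationals [(a - b) / (m + 1)]. *)
Notation grid := (nat * nat * nat)%type.

Module SetTheory.
Import all_boot boolp classical_sets functions cardinality Rstruct Rstruct_topology.

Lemma zorn_preorder (T : Type) (t0 : T) (R : T -> T -> Prop) :
  (forall t, R t t) -> (forall r s t, R r s -> R s t -> R r t) ->
  (forall A : T -> Prop, (forall s t, A s -> A t -> R s t \/ R t s) ->
      exists t, forall s, A s -> R s t) ->
  exists t, forall s, R t s -> R s t.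
Proof.
move=> Rrefl Rtrans Rchain.
pose Rb := fun a b => `[< R a b >].
have Rbrefl : forall t, Rb t t by move=> t; apply/asboolP.
have Rbtrans : forall r s t, Rb r s -> Rb s t -> Rb r t.
  by move=> r s t /asboolP Hrs /asboolP Hst; apply/asboolP; eauto.
have Rbchain : forall A : set T, total_on A (fun x y => Rb x y) ->
    exists t, forall s, A s -> Rb s t.
  move=> A HA; have [t Ht] : exists t, forall s, A s -> R s t.
    by apply: Rchain => s t As At; case: (HA s t As At) => /asboolP; auto.
  by exists t => s As; apply/asboolP; auto.
have [t Ht] := @ZL_preorder T t0 Rb Rbrefl Rbtrans Rbchain.
by exists t => s Rts; have /asboolP := Ht s (introT (asboolP _) Rts).
Qed.

Lemma cantor_bernstein_R (T : Type) (f : T -> R) (g : R -> T) :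
  (forall x y, f x = f y -> x = y) -> (forall x y, g x = g y -> x = y) ->
  exists h : T -> R, (forall x y, h x = h y -> x = y) /\ (forall r, exists x, h x = r).
Proof.
move=> f_inj g_inj.
have leTR : ([set: T] #<= [set: R])%card.
  have : $|{injfun [set: T] >-> [set: R]}|.
    by apply/injfunPex; exists f => // x y _ _; apply: f_inj.
  by case=> k; apply: inj_card_le.
have leRT : ([set: R] #<= [set: T])%card.
  have : $|{injfun [set: R] >-> [set: T]}|.
    by apply/injfunPex; exists g => // x y _ _; apply: g_inj.
  by case=> k; apply: inj_card_le.
have [h [_ h_inj h_surj]] := elimT (@card_set_bijP T R _ _) (Cantor_Bernstein leTR leRT).
exists h; split; first by move=> x y; apply: h_inj; rewrite in_setT.
by move=> r; have [x _ <-] := h_surj r I; exists x.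
Qed.

Lemma countable_enumeration (T : countType) (t0 : T) :
  exists f : nat -> T, forall t, exists n, f n = t.
Proof.
exists (fun n => odflt t0 (unpickle n)) => t; exists (pickle t); by rewrite pickleK.
Qed.

Lemma enum_grid : exists f : nat -> grid, forall t, exists n, f n = t.
Proof. exact: (@countable_enumeration grid (0, 0, 0)%N). Qed.

Lemma enum_grid_lists : exists f : nat -> list grid, forall t, exists n, f n = t.
Proof. exact: (@countable_enumeration (seq grid) [::]). Qed.

Lemma enum_indexed_grid_lists :
  exists f : nat -> list (grid * nat), forall t, exists n, f n = t.
Proof. exact: (@countable_enumeration (seq (grid * nat)) [::]). Qed.

End SetTheory.

Lemma open_ext (X : Type) (open : (X -> Prop) -> Prop) (U V : X -> Prop) :
  (forall x, U x <-> V x) -> open U -> open V.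
Proof.
intros HUV HU. replace V with U; auto.
apply functional_extensionality; intro x. apply propositional_extensionality; auto.
Qed.

Section VectorSpace.
Variable V : vspace.
Notation "0v" := (vzero V).
Notation "x +v y" := (vadd V x y) (at level 50, left associativity).
Notation "a *v x" := (vscal V a x) (at level 40).

Lemma vadd0l x : 0v +v x = x.
Proof. rewrite vaddC; apply vadd0. Qed.

Lemma vaddNl x : vopp V x +v x = 0v.
Proof. rewrite vaddC; apply vaddN. Qed.

Lemma vaddKl x y z : x +v y = x +v z -> y = z.
Proof.
intro H. rewrite <- (vadd0l y), <- (vadd0l z), <- (vaddNl x), <- !vaddA, H. reflexivity.
Qed.

Lemma vscal0l x : 0 *v x = 0v.
Proof. apply (vaddKl (0 *v x)). rewrite vadd0, <- vscalDl. f_equal; ring. Qed.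

Lemma vscal0r a : a *v 0v = 0v.
Proof. apply (vaddKl (a *v 0v)). rewrite vadd0, <- vscalDr, vadd0. reflexivity. Qed.

Lemma vopp_unique x y : x +v y = 0v -> y = vopp V x.
Proof. intro H. apply (vaddKl x). rewrite H, vaddN. reflexivity. Qed.

Lemma vscalN1 x : (-1) *v x = vopp V x.
Proof.
apply vopp_unique. rewrite <- (vscal1 _ x) at 1. rewrite <- vscalDl.
replace (1 + -1) with 0 by ring. apply vscal0l.
Qed.

Lemma vaddACA a b c d : (a +v b) +v (c +v d) = (a +v c) +v (b +v d).
Proof. rewrite <- !vaddA. f_equal. rewrite !vaddA. f_equal. apply vaddC. Qed.

Lemma vsub_eq0 x y : x +v (-1) *v y = 0v -> x = y.
Proof.
intro H. transitivity (x +v ((-1) *v y +v y)).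
- rewrite vscalN1, vaddNl, vadd0. reflexivity.
- rewrite vaddA, H, vadd0l. reflexivity.
Qed.

Lemma vscalI a x y : a <> 0 -> a *v x = a *v y -> x = y.
Proof.
intros Ha H. apply (f_equal (vscal V (/ a))) in H. rewrite !vscalA in H.
replace (/ a * a) with 1 in H by (field; auto). rewrite !vscal1 in H. exact H.
Qed.

Lemma vscal_injl x a b : x <> 0v -> a *v x = b *v x -> a = b.
Proof.
intros Hx H. apply NNPP. intro Hab. apply Hx. apply (vscalI (a - b)); [lra|].
rewrite vscal0r. unfold Rminus. rewrite vscalDl, H, <- vscalDl, Rplus_opp_r.
apply vscal0l.
Qed.

Lemma linear0 f : Defs.linear V f -> f 0v = 0.
Proof. intros [_ Hs]. rewrite <- (vscal0l 0v), Hs. ring. Qed.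

Lemma linearB f x y : Defs.linear V f -> f (x +v (-1) *v y) = f x - f y.
Proof. intros [Ha Hs]. rewrite Ha, Hs. ring. Qed.

End VectorSpace.

(** * Hahn-Banach separation *)

Section HahnBanach.
Variable E : vspace.
Variable openE : (E -> Prop) -> Prop.
Hypothesis HE : lc_topology E openE.
Notation "0v" := (vzero E).
Notation "x +v y" := (vadd E x y) (at level 50, left associativity).
Notation "a *v x" := (vscal E a x) (at level 40).

Lemma nbhd0_absorbs z W : openE W -> W 0v ->
  exists d, 0 < d /\ forall s, Rabs s < d -> W (s *v z).
Proof.
intros HW W0. destruct HE as [_ [_ [_ [Hs _]]]].
destruct (Hs 0 z W HW) as [d [O [Hd [_ [Oz HO]]]]].
{ rewrite vscal0l. exact W0. }
exists d. split; auto. intros s Hs'. apply HO; auto. rewrite Rminus_0_r; auto.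
Qed.

Lemma open_scal_expand W b : openE W -> W b -> exists e, 0 < e /\ W ((1 + e) *v b).
Proof.
intros HW Wb. destruct HE as [_ [_ [_ [Hs _]]]].
destruct (Hs 1 b W HW) as [d [O [Hd [_ [Ob HO]]]]].
{ rewrite vscal1. exact Wb. }
exists (d / 2). split; [lra|]. apply HO; auto.
replace (1 + d / 2 - 1) with (d / 2) by ring. rewrite Rabs_pos_eq; lra.
Qed.

Variable U : E -> Prop.
Hypothesis HU : openE U.
Hypothesis U0 : U 0v.
Hypothesis Uconv : convex E U.
Variable x0 : E.
Hypothesis nUx0 : ~ U x0.

(* Graphs of linear forms f on a subspace containing x0, with f x0 = 1 and
   f < 1 on U; the extension step is the classical one-dimensional one. *)
Definition admissible (G : E -> R -> Prop) :=
  (forall y1 r1 y2 r2, G y1 r1 -> G y2 r2 -> G (y1 +v y2) (r1 + r2)) /\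
  (forall a y r, G y r -> G (a *v y) (a * r)) /\
  (forall r, G 0v r -> r = 0) /\
  G x0 1 /\
  (forall y r, G y r -> U y -> r < 1).

Record adm_graph := AdmGraph { graph :> E -> R -> Prop; graphP : admissible graph }.

Definition graph_le (p q : adm_graph) := forall y r, p y r -> q y r.

Lemma admissible_fun G : admissible G -> forall y r1 r2, G y r1 -> G y r2 -> r1 = r2.
Proof.
intros [Ha [Hs [H0 _]]] y r1 r2 H1 H2.
assert (H := Ha _ _ _ _ H1 (Hs (-1) _ _ H2)).
rewrite vscalN1, vaddN in H. apply H0 in H. lra.
Qed.

Lemma admissible0 G : admissible G -> G 0v 0.
Proof.
intros [_ [Hs [_ [Hx _]]]]. assert (H := Hs 0 x0 1 Hx).
rewrite Rmult_0_l, vscal0l in H. exact H.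
Qed.

Definition line_graph (y : E) (r : R) := y = r *v x0.

Lemma line_graph_admissible : admissible line_graph.
Proof.
assert (x0_nz : x0 <> 0v) by (intro H; apply nUx0; rewrite H; auto).
unfold line_graph. repeat split.
- intros y1 r1 y2 r2 -> ->. symmetry. apply vscalDl.
- intros a y r ->. apply vscalA.
- intros r H. apply (vscal_injl E x0); auto. rewrite vscal0l. auto.
- rewrite vscal1; auto.
- intros y r -> Uy. destruct (Rlt_le_dec r 1) as [|Hr]; auto. exfalso. apply nUx0.
  assert (Hc := Uconv (r *v x0) 0v (/ r)
                  ltac:(split; [apply Rlt_le, Rinv_0_lt_compat; lra
                               |apply Rinv_le_contravar in Hr; lra]) Uy U0).
  rewrite vscal0r, vadd0, vscalA, Rinv_l, vscal1 in Hc by lra. exact Hc.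
Qed.

Lemma chain_upper_bound (A : adm_graph -> Prop) :
  (forall s t, A s -> A t -> graph_le s t \/ graph_le t s) ->
  exists t, forall s, A s -> graph_le s t.
Proof.
intro Hch. destruct (classic (exists p, A p)) as [[p Ap]|Hn].
2:{ exists (AdmGraph line_graph line_graph_admissible). intros s As. exfalso; eauto. }
set (G := fun y r => exists q : adm_graph, A q /\ q y r).
assert (HG : admissible G).
{ repeat split.
  - intros y1 r1 y2 r2 [q1 [A1 H1]] [q2 [A2 H2]].
    destruct (Hch q1 q2 A1 A2) as [L|L].
    + exists q2; split; auto. apply (proj1 (graphP q2)); auto.
    + exists q1; split; auto. apply (proj1 (graphP q1)); auto.
  - intros a y r [q [Aq H]]. exists q; split; auto. apply (proj1 (proj2 (graphP q))); auto.
  - intros r [q [Aq H]]. apply (proj1 (proj2 (proj2 (graphP q)))); auto.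
  - exists p; split; auto. apply (graphP p).
  - intros y r [q [Aq H]]. apply (proj2 (proj2 (proj2 (proj2 (graphP q))))); auto. }
exists (AdmGraph G HG). intros s As y r H. exists s; auto.
Qed.

Section Extension.
Variable p : adm_graph.
Variable z : E.
Hypothesis z_undef : ~ exists r, p z r.

(* The admissible values c for the new value at z are exactly those with
   lower_ratio < c < upper_ratio for all lower and upper ratios. *)
Definition lower_ratio (c : R) :=
  exists y r s, p y r /\ 0 < s /\ U (y +v (- s) *v z) /\ c = (r - 1) / s.
Definition upper_ratio (c : R) :=
  exists y r t, p y r /\ 0 < t /\ U (y +v t *v z) /\ c = (1 - r) / t.

Lemma ratio_lt_of_convex_lt1 r1 r2 s t : 0 < s -> 0 < t ->
  t / (s + t) * r1 + (1 - t / (s + t)) * r2 < 1 -> (r1 - 1) / s < (1 - r2) / t.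
Proof.
intros Hs Ht H.
replace (1 - t / (s + t)) with (s / (s + t)) in H by (field; lra).
apply (Rmult_lt_compat_l (s + t)) in H; [|lra].
replace ((s + t) * (t / (s + t) * r1 + s / (s + t) * r2)) with (t * r1 + s * r2) in H
  by (field; lra).
apply (Rmult_lt_reg_l (s * t)); [nra|].
replace (s * t * ((r1 - 1) / s)) with (t * (r1 - 1)) by (field; lra).
replace (s * t * ((1 - r2) / t)) with (s * (1 - r2)) by (field; lra).
lra.
Qed.

Lemma lower_lt_upper a b : lower_ratio a -> upper_ratio b -> a < b.
Proof.
intros [y1 [r1 [s [G1 [Hs [U1 ->]]]]]] [y2 [r2 [t [G2 [Ht [U2 ->]]]]]].
set (l := t / (s + t)).
assert (Hl : 0 <= l <= 1).
{ unfold l. split; [apply Rlt_le, Rdiv_lt_0_compat; lra|].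
  apply Rmult_le_reg_l with (s + t); [lra|]. field_simplify; lra. }
assert (Hc := Uconv _ _ l Hl U1 U2).
rewrite !vscalDr, !vscalA, vaddACA, <- vscalDl in Hc.
replace (l * - s + (1 - l) * t) with 0 in Hc by (unfold l; field; lra).
rewrite vscal0l, vadd0 in Hc.
destruct (graphP p) as [Ha [Hsc [_ [_ HUc]]]].
apply ratio_lt_of_convex_lt1; auto.
apply (HUc _ _ (Ha _ _ _ _ (Hsc l _ _ G1) (Hsc (1 - l) _ _ G2)) Hc).
Qed.

(* Openness of U: every ratio can be pushed strictly further by scaling. *)
Lemma lower_ratio_no_max a : lower_ratio a -> exists a', lower_ratio a' /\ a < a'.
Proof.
intros [y [r [s [Gy [Hs [Uy ->]]]]]].
destruct (open_scal_expand _ _ HU Uy) as [e [He Ue]].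
exists (((1 + e) * r - 1) / ((1 + e) * s)). split.
- exists ((1 + e) *v y), ((1 + e) * r), ((1 + e) * s). repeat split.
  + apply (proj1 (proj2 (graphP p))); auto.
  + nra.
  + rewrite vscalDr, vscalA in Ue.
    replace ((1 + e) * - s) with (- ((1 + e) * s)) in Ue by ring. exact Ue.
- apply (Rmult_lt_reg_l ((1 + e) * s)); [nra|].
  replace ((1 + e) * s * ((r - 1) / s)) with ((1 + e) * (r - 1)) by (field; lra).
  replace ((1 + e) * s * (((1 + e) * r - 1) / ((1 + e) * s))) with ((1 + e) * r - 1)
    by (field; nra).
  lra.
Qed.

Lemma upper_ratio_no_min b : upper_ratio b -> exists b', upper_ratio b' /\ b' < b.
Proof.
intros [y [r [t [Gy [Ht [Uy ->]]]]]].
destruct (open_scal_expand _ _ HU Uy) as [e [He Ue]].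
exists ((1 - (1 + e) * r) / ((1 + e) * t)). split.
- exists ((1 + e) *v y), ((1 + e) * r), ((1 + e) * t). repeat split.
  + apply (proj1 (proj2 (graphP p))); auto.
  + nra.
  + rewrite vscalDr, vscalA in Ue. exact Ue.
- apply (Rmult_lt_reg_l ((1 + e) * t)); [nra|].
  replace ((1 + e) * t * ((1 - r) / t)) with ((1 + e) * (1 - r)) by (field; lra).
  replace ((1 + e) * t * ((1 - (1 + e) * r) / ((1 + e) * t))) with (1 - (1 + e) * r)
    by (field; nra).
  lra.
Qed.

Lemma lower_ratio_exists : exists a, lower_ratio a.
Proof.
destruct (nbhd0_absorbs z U HU U0) as [d [Hd Hz]].
exists ((0 - 1) / (d / 2)), 0v, 0, (d / 2). repeat split.
- apply admissible0, graphP.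
- lra.
- rewrite vadd0l. apply Hz. rewrite Rabs_Ropp, Rabs_pos_eq; lra.
Qed.

Lemma upper_ratio_exists : exists b, upper_ratio b.
Proof.
destruct (nbhd0_absorbs z U HU U0) as [d [Hd Hz]].
exists ((1 - 0) / (d / 2)), 0v, 0, (d / 2). repeat split.
- apply admissible0, graphP.
- lra.
- rewrite vadd0l. apply Hz. rewrite Rabs_pos_eq; lra.
Qed.

Definition ext_value : R.
Proof.
refine (proj1_sig (completeness lower_ratio _ lower_ratio_exists)).
destruct upper_ratio_exists as [b Hb]. exists b. intros a Ha. left. apply lower_lt_upper; auto.
Defined.

Lemma ext_value_lub : is_lub lower_ratio ext_value.
Proof. unfold ext_value. apply (proj2_sig (completeness _ _ _)). Qed.

Lemma lower_ratio_lt_ext_value a : lower_ratio a -> a < ext_value.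
Proof.
intros Ha. destruct (lower_ratio_no_max a Ha) as [a' [Ha' Hlt]].
assert (H := proj1 ext_value_lub a' Ha'). lra.
Qed.

Lemma ext_value_lt_upper_ratio b : upper_ratio b -> ext_value < b.
Proof.
intros Hb. destruct (upper_ratio_no_min b Hb) as [b' [Hb' Hlt]].
assert (ext_value <= b').
{ apply (proj2 ext_value_lub). intros a Ha. left. apply lower_lt_upper; auto. }
lra.
Qed.

Definition ext_graph (y : E) (r : R) :=
  exists y1 r1 t, p y1 r1 /\ y = y1 +v t *v z /\ r = r1 + t * ext_value.

Lemma ext_graph_admissible : admissible ext_graph.
Proof.
destruct (graphP p) as [Ha [Hsc [H0 [Hx HUc]]]].
repeat split.
- intros y1 r1 y2 r2 [u1 [s1 [t1 [G1 [-> ->]]]]] [u2 [s2 [t2 [G2 [-> ->]]]]].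
  exists (u1 +v u2), (s1 + s2), (t1 + t2). repeat split; auto.
  + rewrite vaddACA, <- vscalDl. reflexivity.
  + ring.
- intros a y r [u [s [t [G1 [-> ->]]]]].
  exists (a *v u), (a * s), (a * t). repeat split; auto.
  + rewrite vscalDr, vscalA. reflexivity.
  + ring.
- intros r [u [s [t [G1 [Hy ->]]]]].
  destruct (Req_dec t 0) as [Ht|Ht].
  + subst t. rewrite vscal0l, vadd0 in Hy. subst u. rewrite (H0 s G1). ring.
  + exfalso. apply z_undef. exists ((-1 / t) * s).
    assert (Hz : z = (-1 / t) *v u).
    { apply (vscalI _ t); auto. rewrite vscalA. replace (t * (-1 / t)) with (-1) by (field; auto).
      rewrite vscalN1. apply vopp_unique. auto. }
    rewrite Hz. apply Hsc; auto.
- exists x0, 1, 0. repeat split; auto.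
  + rewrite vscal0l, vadd0; auto.
  + ring.
- intros y r [u [s [t [G1 [-> ->]]]]] Hy.
  destruct (Rtotal_order t 0) as [Ht|[Ht|Ht]].
  + assert (HA : lower_ratio ((s - 1) / (- t))).
    { exists u, s, (- t). repeat split; auto; [lra|]. rewrite Ropp_involutive; auto. }
    apply lower_ratio_lt_ext_value in HA.
    apply (Rmult_lt_compat_l (- t)) in HA; [|lra].
    replace (- t * ((s - 1) / - t)) with (s - 1) in HA by (field; lra). lra.
  + subst t. rewrite vscal0l, vadd0 in Hy. rewrite Rmult_0_l, Rplus_0_r. apply HUc with u; auto.
  + assert (HB : upper_ratio ((1 - s) / t)) by (exists u, s, t; repeat split; auto).
    apply ext_value_lt_upper_ratio in HB.
    apply (Rmult_lt_compat_l t) in HB; [|lra].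
    replace (t * ((1 - s) / t)) with (1 - s) in HB by (field; lra). lra.
Qed.

Lemma le_ext_graph : graph_le p (AdmGraph ext_graph ext_graph_admissible).
Proof.
intros y r Hy. exists y, r, 0. repeat split; auto.
- rewrite vscal0l, vadd0; auto.
- ring.
Qed.

Lemma ext_graph_not_le : ~ graph_le (AdmGraph ext_graph ext_graph_admissible) p.
Proof.
intro H. apply z_undef. exists (0 + 1 * ext_value). apply H.
exists 0v, 0, 1. repeat split; auto.
- apply admissible0, graphP.
- rewrite vscal1, vadd0l; auto.
Qed.

End Extension.

Lemma exists_total_admissible : exists p : adm_graph, forall y, exists r, p y r.
Proof.
destruct (SetTheory.zorn_preorder _ (AdmGraph line_graph line_graph_admissible) graph_le)
  as [p Hp].
- intros t y r; auto.
- intros r s t H1 H2 y v H; auto.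
- apply chain_upper_bound.
- exists p. intro y. apply NNPP. intro Hn.
  apply (ext_graph_not_le p y Hn), Hp, le_ext_graph.
Qed.

End HahnBanach.

Section DualSeparates.
Variable E : vspace.
Variable openE : (E -> Prop) -> Prop.
Hypothesis HE : lc_topology E openE.
Notation "0v" := (vzero E).
Notation "x +v y" := (vadd E x y) (at level 50, left associativity).
Notation "a *v x" := (vscal E a x) (at level 40).

Lemma linear_continuous_of_bounded f : Defs.linear E f ->
  (exists O, openE O /\ O 0v /\ forall y, O y -> Rabs (f y) < 1) ->
  Defs.continuous E openE f.
Proof.
intros [Hfa Hfs] [O [HO [O0 Hb]]] x eps Heps.
destruct HE as [_ [_ [Ha [Hs _]]]].
destruct (Hs (/ eps) 0v O HO) as [d [O1 [Hd [HO1 [O10 H1]]]]].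
{ rewrite vscal0r; auto. }
destruct (Ha x ((-1) *v x) O1 HO1) as [O2 [O3 [HO2 [HO3 [O2x [O3x H23]]]]]].
{ rewrite vscalN1, vaddN; auto. }
exists O2. repeat split; auto. intros y Hy.
assert (Hc := Hb _ (H1 (/ eps) _ ltac:(rewrite Rminus_diag, Rabs_R0; auto)
                    (H23 _ _ Hy O3x))).
rewrite Hfs, Hfa, Hfs, Rabs_mult, Rabs_inv, (Rabs_pos_eq eps) in Hc by lra.
apply (Rmult_lt_compat_l eps) in Hc; [|lra].
rewrite <- Rmult_assoc, Rinv_r, Rmult_1_l, Rmult_1_r in Hc by lra.
replace (f y - f x) with (f y + -1 * f x) by ring. exact Hc.
Qed.

Lemma dual_separates_points x0 : x0 <> 0v -> exists f : dual E openE, proj1_sig f x0 <> 0.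
Proof.
intro Hx0.
destruct HE as [Htop [Hh [_ [Hs Hcv]]]].
destruct (Hh x0 0v Hx0) as [P [Q [_ [HQ [Px0 [Q0 PQ]]]]]].
destruct (Hcv Q HQ Q0) as [U [HU [U0 [Uc UQ]]]].
assert (nU : ~ U x0) by (intro H; apply (PQ x0); auto).
destruct (exists_total_admissible E openE HE U HU U0 Uc x0 nU) as [p Hp].
set (f := fun y => proj1_sig (constructive_indefinite_description _ (Hp y))).
assert (Hfp : forall y, p y (f y)).
{ intro y. unfold f. apply (proj2_sig (constructive_indefinite_description _ _)). }
destruct (graphP _ _ _ p) as [Gadd [Gsc [_ [Gx GU]]]].
assert (Hfun := admissible_fun _ _ _ _ (graphP _ _ _ p)).
assert (Hlin : Defs.linear E f).
{ split.
  - intros x y. apply (Hfun (x +v y)); auto.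
  - intros a x. apply (Hfun (a *v x)); auto. }
assert (Hcont : Defs.continuous E openE f).
{ apply linear_continuous_of_bounded; auto.
  destruct (Hs (-1) 0v U HU) as [d [U' [Hd [HU' [U'0 HU'1]]]]].
  { rewrite vscal0r; auto. }
  exists (fun y => U y /\ U' y). repeat split; auto.
  - apply Htop; auto.
  - intros y [Uy U'y]. apply Rabs_def1.
    + apply (GU y); auto.
    + assert (H := GU _ _ (Hfp ((-1) *v y))
                     (HU'1 (-1) y ltac:(rewrite Rminus_diag, Rabs_R0; auto) U'y)).
      rewrite (proj2 Hlin) in H. lra. }
exists (exist _ f (conj Hlin Hcont)). simpl.
rewrite (Hfun x0 (f x0) 1 (Hfp x0) Gx). lra.
Qed.

End DualSeparates.

Section Initial.
Variables I X : Type.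
Variable F : I -> X -> R.
Notation W := (initial_open I X F).

Lemma initial_open_inter S1 S2 : W S1 -> W S2 -> W (fun x => S1 x /\ S2 x).
Proof.
intros H1 H2 x [x1 x2].
destruct (H1 x x1) as [l1 [e1 [He1 K1]]].
destruct (H2 x x2) as [l2 [e2 [He2 K2]]].
exists (l1 ++ l2), (Rmin e1 e2). split; [apply Rmin_pos; auto|].
intros y Hy. split.
- apply K1. intros i Hi. eapply Rlt_le_trans; [apply Hy, in_or_app; auto|apply Rmin_l].
- apply K2. intros i Hi. eapply Rlt_le_trans; [apply Hy, in_or_app; auto|apply Rmin_r].
Qed.

Lemma initial_open_ball i c r : W (fun x => Rabs (F i x - c) < r).
Proof.
intros x Hx. exists (i :: nil), (r - Rabs (F i x - c)). split; [lra|].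
intros y Hy. specialize (Hy i (or_introl eq_refl)).
replace (F i y - c) with ((F i y - F i x) + (F i x - c)) by ring.
eapply Rle_lt_trans; [apply Rabs_triang|]. lra.
Qed.

Lemma initial_topology : is_topology X W.
Proof.
split; [|split; [apply initial_open_inter|]].
- intros x _. exists nil, 1. split; [lra|]. auto.
- intros Fm HFm x [U [FU Ux]]. destruct (HFm U FU x Ux) as [l [e [He K]]].
  exists l, e. split; auto. intros y Hy. exists U. split; auto.
Qed.

Lemma initial_open_box (l : list I) (x : X) (r : R) :
  W (fun y => forall i, In i l -> Rabs (F i y - F i x) < r).
Proof.
induction l as [|a l IH].
- intros y _. exists nil, 1. split; [lra|]. intros z _ i [].
- apply open_ext with (U := fun y => Rabs (F a y - F a x) < r /\
                                   forall i, In i l -> Rabs (F i y - F i x) < r).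
  + intros y. split.
    * intros [Ha Hl] i [<-|Hi]; auto.
    * intros H. split; [apply (H a); left; reflexivity|intros i Hi; apply H; right; exact Hi].
  + apply initial_open_inter; auto. apply initial_open_ball.
Qed.

End Initial.

(** * Pseudocharacter of sigma-spaces *)

Section SigmaSpace.
Variable X : Type.
Variable open : (X -> Prop) -> Prop.
Hypothesis Htop : is_topology X open.
Hypothesis HT1 : forall x y, x <> y -> exists O, open O /\ O y /\ ~ O x.
Hypothesis Hsigma : sigma_space X open.

Definition adherent (A : X -> Prop) (z : X) :=
  forall O, open O -> O z -> exists w, O w /\ A w.

Lemma open_avoiding_list (O : X -> Prop) (y x : X) (P : (X -> Prop) -> Prop) :
  open O -> O y -> (forall A, P A -> ~ adherent A x -> ~ adherent A y) ->
  forall l : list (X -> Prop), exists S, open S /\ S y /\ (forall w, S w -> O w) /\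
     forall A, In A l -> P A -> ~ adherent A x -> forall w, S w -> ~ A w.
Proof.
intros HO Oy HP l. induction l as [|A0 l IH].
- exists O. split; [exact HO|split; [exact Oy|split; [auto|intros A []]]].
- destruct IH as [S [HS [Sy [SO HSA]]]].
  destruct (classic (P A0 /\ ~ adherent A0 x)) as [[PA nA]|Hno].
  + assert (nAy := HP A0 PA nA). unfold adherent in nAy.
    apply not_all_ex_not in nAy. destruct nAy as [OA HOA].
    apply imply_to_and in HOA. destruct HOA as [HOA1 HOA2].
    apply imply_to_and in HOA2. destruct HOA2 as [OAy HOA3].
    exists (fun w => S w /\ OA w). repeat split; auto.
    * apply Htop; auto.
    * intros w [Sw _]; auto.
    * intros B [<-|HB] PB nB w [Sw OAw] Bw.
      -- apply HOA3. exists w; auto.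
      -- apply (HSA B HB PB nB w Sw Bw).
  + exists S. repeat split; auto.
    intros B [<-|HB] PB nB w Sw Bw.
    * apply Hno; auto.
    * apply (HSA B HB PB nB w Sw Bw).
Qed.

(* The family Ns n is locally finite: around y only finitely many of its
   members matter, and these can be avoided one at a time. *)
Lemma adherence_nbhd_open (Ns : (X -> Prop) -> Prop) (x : X) :
  locally_finite X open Ns ->
  open (fun y => forall A, Ns A -> adherent A y -> adherent A x).
Proof.
intros Hlf.
apply open_ext with (U := fun y => exists S, (open S /\ forall z, S z ->
           forall A, Ns A -> adherent A z -> adherent A x) /\ S y).
- intros y. split.
  + intros [S [[_ HS] Sy]]. apply HS; auto.
  + intros Hy. destruct (Hlf y) as [O [HO [Oy [l Hl]]]].
    destruct (open_avoiding_list O y x Ns HO Oy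
                (fun A NA nAx nAy => nAx (Hy A NA nAy)) l)
      as [S [HS [Sy [SO HSA]]]].
    exists S. repeat split; auto. intros z Sz A NA Az.
    apply NNPP. intro nAx.
    destruct (Az S HS Sz) as [w [Sw Aw]].
    apply (HSA A (Hl A NA (ex_intro _ w (conj (SO w Sw) Aw))) NA nAx w Sw Aw).
- apply Htop. intros S [HS _]; exact HS.
Qed.

Lemma sigma_space_pseudocharacter : countable_pseudocharacter X open.
Proof.
destruct Hsigma as [Hreg [N [Hnet [Ns [Hlf HN]]]]].
intro x. exists (fun n y => forall A, Ns n A -> adherent A y -> adherent A x).
split.
- intro n. split; [apply adherence_nbhd_open, Hlf|auto].
- intros y Hy. apply NNPP. intro Hne.
  destruct (HT1 x y (fun H => Hne (eq_sym H))) as [O [HO [Oy nOx]]].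
  assert (HC : Defs.closed X open (fun z => ~ O z)).
  { unfold Defs.closed. apply open_ext with (U := O); auto.
    intro z. split; [tauto|apply NNPP]. }
  destruct (Hreg _ y HC ltac:(tauto)) as [V1 [V2 [HV1 [HV2 [V1y [CV2 D12]]]]]].
  destruct (Hnet V1 y HV1 V1y) as [A [NA [Ay AV1]]].
  destruct (proj1 (HN A) NA) as [n Nn].
  assert (Ay' : adherent A y) by (intros O' _ O'y; exists y; auto).
  destruct (Hy n A Nn Ay' V2 HV2 (CV2 x nOx)) as [w [V2w Aw]].
  apply (D12 w); auto.
Qed.

End SigmaSpace.

Section WeakTopology.
Variable E : vspace.
Variable openE : (E -> Prop) -> Prop.
Hypothesis HE : lc_topology E openE.
Notation "0v" := (vzero E).
Notation W := (weak_open E openE).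

Lemma weak_T1 x y : x <> y -> exists O, W O /\ O y /\ ~ O x.
Proof.
intro Hxy.
assert (Hnz : vadd E y (vscal E (-1) x) <> 0v).
{ intro H. apply Hxy. symmetry. apply vsub_eq0. auto. }
destruct (dual_separates_points E openE HE _ Hnz) as [f Hf].
rewrite linearB in Hf by exact (proj1 (proj2_sig f)).
exists (fun z => Rabs (proj1_sig f z - proj1_sig f y) < Rabs (proj1_sig f y - proj1_sig f x)).
repeat split.
- apply (initial_open_ball _ _ (fun f x => proj1_sig f x)).
- rewrite Rminus_diag, Rabs_R0. apply Rabs_pos_lt. auto.
- rewrite Rabs_minus_sym. lra.
Qed.

Hypothesis Hsig : sigma_space E W.

Lemma weak_countable_pseudocharacter : countable_pseudocharacter E W.
Proof.
apply sigma_space_pseudocharacter; auto.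
- apply initial_topology.
- exact weak_T1.
Qed.

Definition dual_zero : dual E openE.
Proof.
exists (fun _ => 0). split; [split; intros; ring|].
intros x eps He. exists (fun _ => True). repeat split; auto.
- exact (proj1 (proj1 HE)).
- intros y _. rewrite Rminus_diag, Rabs_R0; auto.
Defined.

(* Each pseudocharacter neighbourhood of 0 contains a basic neighbourhood
   given by a finite list of functionals; these lists are flattened with the
   Cantor pairing. *)
Lemma separating_dual_sequence : exists phi : nat -> dual E openE,
  forall x y, (forall k, proj1_sig (phi k) x = proj1_sig (phi k) y) -> x = y.
Proof.
destruct (weak_countable_pseudocharacter 0v) as [On [HOn HOn0]].
assert (Hb : forall n, exists l : list (dual E openE), exists e, 0 < e /\
   forall y, (forall f, In f l -> Rabs (proj1_sig f y - proj1_sig f 0v) < e) -> On n y).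
{ intro n. destruct (HOn n) as [HW H0]. apply (HW 0v H0). }
set (L := fun n => proj1_sig (constructive_indefinite_description _ (Hb n))).
assert (HL : forall n, exists e, 0 < e /\
   forall y, (forall f, In f (L n) -> Rabs (proj1_sig f y - proj1_sig f 0v) < e) -> On n y).
{ intro n. exact (proj2_sig (constructive_indefinite_description _ (Hb n))). }
exists (fun k => nth (snd (of_nat k)) (L (fst (of_nat k))) dual_zero).
intros x y Hk. apply vsub_eq0, HOn0. intro n.
destruct (HL n) as [e [He K]]. apply K. intros f Hf.
destruct (In_nth _ _ dual_zero Hf) as [j [_ Hj]].
specialize (Hk (to_nat (n, j))). rewrite cancel_of_to in Hk. simpl in Hk.
rewrite Hj in Hk.
rewrite linearB, linear0, Hk by exact (proj1 (proj2_sig f)).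
rewrite !Rminus_diag, Rabs_R0. auto.
Qed.

End WeakTopology.

Definition grid_val (q : grid) : R :=
  (INR (fst (fst q)) - INR (snd (fst q))) / (INR (snd q) + 1).

Definition grid_approx (v : R) (m : nat) : grid :=
  let z := up (v * (INR m + 1)) in (Z.to_nat z, Z.to_nat (- z), m).

Lemma INR_Z_to_nat_sub (z : Z) : INR (Z.to_nat z) - INR (Z.to_nat (- z)) = IZR z.
Proof.
rewrite !INR_IZR_INZ. destruct (Z_le_gt_dec 0 z) as [H|H].
- rewrite (Z2Nat.id z H). replace (Z.to_nat (- z)) with 0%nat by lia. simpl. ring.
- rewrite (Z2Nat.id (- z)) by lia. replace (Z.to_nat z) with 0%nat by lia.
  rewrite opp_IZR. simpl. ring.
Qed.

Lemma grid_approx_spec v m : Rabs (grid_val (grid_approx v m) - v) <= / (INR m + 1).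
Proof.
unfold grid_val, grid_approx. simpl. rewrite INR_Z_to_nat_sub.
destruct (archimed (v * (INR m + 1))) as [H1 H2].
assert (Hm : 0 < INR m + 1) by (generalize (pos_INR m); lra).
set (z := IZR (up (v * (INR m + 1)))) in *.
replace (z / (INR m + 1) - v) with ((z - v * (INR m + 1)) * / (INR m + 1)) by (field; lra).
assert (Hinv : 0 < / (INR m + 1)) by (apply Rinv_0_lt_compat; auto).
rewrite Rabs_pos_eq by (apply Rmult_le_pos; lra).
rewrite <- (Rmult_1_l (/ (INR m + 1))) at 2. apply Rmult_le_compat_r; lra.
Qed.

Lemma exists_small_ratio c e : 0 < e -> exists m : nat, c / (INR m + 1) < e.
Proof.
intros He. destruct (INR_archimed e c He) as [n Hn]. exists n.
assert (Hm : 0 < INR n + 1) by (generalize (pos_INR n); lra).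
apply (Rmult_lt_reg_l (INR n + 1)); auto.
replace ((INR n + 1) * (c / (INR n + 1))) with c by (field; lra). lra.
Qed.

Lemma uniform_pos_on_list {I : Type} (Q : I -> R -> Prop) :
  (forall i t t', Q i t -> 0 < t' <= t -> Q i t') ->
  (forall i, exists t, 0 < t /\ Q i t) ->
  forall l, exists t, 0 < t /\ forall i, In i l -> Q i t.
Proof.
intros Hm Hex l. induction l as [|a l IH].
- exists 1. split; [lra|]. intros i [].
- destruct IH as [t [Ht Hl]]. destruct (Hex a) as [ta [Hta Ha]].
  assert (Hmin : 0 < Rmin t ta) by (apply Rmin_pos; auto).
  exists (Rmin t ta). split; auto.
  intros i [<-|Hi].
  + apply Hm with ta; auto. split; auto. apply Rmin_r.
  + apply Hm with t; auto. split; auto. apply Rmin_l.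
Qed.

Lemma Rmult_continuous r b eps : 0 < eps -> exists t, 0 < t /\
  forall s a, Rabs (s - r) < t -> Rabs (a - b) < t -> Rabs (s * a - r * b) < eps.
Proof.
intros He.
set (M := Rabs r + Rabs b + 1).
assert (HM : 0 < M) by (unfold M; generalize (Rabs_pos r) (Rabs_pos b); lra).
exists (Rmin 1 (eps / (2 * M))). split.
{ apply Rmin_pos; [lra|]. apply Rdiv_lt_0_compat; lra. }
intros s a Hs Ha.
assert (Ht1 := Rmin_l 1 (eps / (2 * M))). assert (Ht2 := Rmin_r 1 (eps / (2 * M))).
set (t := Rmin 1 (eps / (2 * M))) in *.
replace (s * a - r * b) with (s * (a - b) + (s - r) * b) by ring.
eapply Rle_lt_trans; [apply Rabs_triang|]. rewrite !Rabs_mult.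
assert (Hsr : Rabs s <= Rabs r + 1).
{ replace s with ((s - r) + r) by ring. eapply Rle_trans; [apply Rabs_triang|]. lra. }
assert (H1 : Rabs s * Rabs (a - b) <= (Rabs r + 1) * t).
{ apply Rmult_le_compat; auto using Rabs_pos; lra. }
assert (H2 : Rabs (s - r) * Rabs b <= t * Rabs b).
{ apply Rmult_le_compat_r; auto using Rabs_pos; lra. }
assert (H3 : t * M <= eps / 2).
{ apply Rle_trans with (eps / (2 * M) * M); [apply Rmult_le_compat_r; lra|].
  right. field. lra. }
unfold M in H3. nra.
Qed.

Lemma in_list_max l i : In i l -> (i <= list_max l)%nat.
Proof.
intro H. assert (H2 := proj1 (list_max_le l (list_max l)) (le_n _)).
rewrite Forall_forall in H2. auto.
Qed.

Lemma nth_map_seq {A : Type} (f : nat -> A) K i d :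
  (i < K)%nat -> nth i (map f (seq 0 K)) d = f i.
Proof.
intro H. rewrite nth_indep with (d' := f 0%nat) by (rewrite length_map, length_seq; auto).
rewrite map_nth, seq_nth; auto.
Qed.

Section InitialLinear.
Variable E : vspace.
Notation "0v" := (vzero E).
Notation "x +v y" := (vadd E x y) (at level 50, left associativity).
Notation "a *v x" := (vscal E a x) (at level 40).
Variable I : Type.
Variable phi : I -> E -> R.
Hypothesis phi_linear : forall i, Defs.linear E (phi i).
Hypothesis phi_sep : forall x y, (forall i, phi i x = phi i y) -> x = y.
Notation tau := (initial_open I E phi).

Lemma initial_linear_hausdorff : hausdorff E tau.
Proof.
intros x y Hxy.
assert (Hk : exists k, phi k x <> phi k y).
{ apply NNPP. intro Hn. apply Hxy, phi_sep. intro k. apply NNPP. intro H.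
  apply Hn. exists k; auto. }
destruct Hk as [k Hk].
set (d := Rabs (phi k x - phi k y)).
assert (Hd : 0 < d) by (apply Rabs_pos_lt; lra).
exists (fun z => Rabs (phi k z - phi k x) < d / 2), (fun z => Rabs (phi k z - phi k y) < d / 2).
repeat split; try apply initial_open_ball.
- rewrite Rminus_diag, Rabs_R0; lra.
- rewrite Rminus_diag, Rabs_R0; lra.
- intros z H1 H2.
  assert (Rabs (phi k x - phi k y) <= Rabs (phi k z - phi k x) + Rabs (phi k z - phi k y)).
  { replace (phi k x - phi k y) with (- (phi k z - phi k x) + (phi k z - phi k y)) by ring.
    eapply Rle_trans; [apply Rabs_triang|]. rewrite Rabs_Ropp. lra. }
  unfold d in *. lra.
Qed.

Lemma initial_linear_add_continuous x y O : tau O -> O (x +v y) ->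
  exists O1 O2, tau O1 /\ tau O2 /\ O1 x /\ O2 y /\ forall a b, O1 a -> O2 b -> O (a +v b).
Proof.
intros HO Oxy. destruct (HO _ Oxy) as [l [e [He K]]].
exists (fun a => forall i, In i l -> Rabs (phi i a - phi i x) < e / 2),
       (fun b => forall i, In i l -> Rabs (phi i b - phi i y) < e / 2).
repeat split; try apply initial_open_box.
- intros i _. rewrite Rminus_diag, Rabs_R0; lra.
- intros i _. rewrite Rminus_diag, Rabs_R0; lra.
- intros a b Ha Hb. apply K. intros i Hi. rewrite !(proj1 (phi_linear i)).
  replace (phi i a + phi i b - (phi i x + phi i y))
    with ((phi i a - phi i x) + (phi i b - phi i y)) by ring.
  eapply Rle_lt_trans; [apply Rabs_triang|].
  specialize (Ha i Hi). specialize (Hb i Hi). lra.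
Qed.

Lemma initial_linear_scal_continuous r x O : tau O -> O (r *v x) ->
  exists delta O', 0 < delta /\ tau O' /\ O' x /\
    forall s y, Rabs (s - r) < delta -> O' y -> O (s *v y).
Proof.
intros HO Orx. destruct (HO _ Orx) as [l [e [He K]]].
destruct (uniform_pos_on_list (fun i t => forall s a, Rabs (s - r) < t ->
             Rabs (a - phi i x) < t -> Rabs (s * a - r * phi i x) < e)) with (l := l)
  as [t [Ht Hl]].
{ intros i t t' H [H1 H2] s a Hs Ha. apply H; lra. }
{ intros i. apply Rmult_continuous; auto. }
exists t, (fun y => forall i, In i l -> Rabs (phi i y - phi i x) < t).
repeat split; auto; try apply initial_open_box.
- intros i _. rewrite Rminus_diag, Rabs_R0; lra.
- intros s y Hs Hy. apply K. intros i Hi. rewrite !(proj2 (phi_linear i)). apply Hl; auto.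
Qed.

Lemma initial_linear_convex_nbhd O : tau O -> O 0v ->
  exists O', tau O' /\ O' 0v /\ convex E O' /\ forall y, O' y -> O y.
Proof.
intros HO O0. destruct (HO _ O0) as [l [e [He K]]].
exists (fun y => forall i, In i l -> Rabs (phi i y - phi i 0v) < e).
repeat split; auto; try apply initial_open_box.
- intros i _. rewrite Rminus_diag, Rabs_R0; lra.
- intros x y t Ht Hx Hy i Hi. destruct (phi_linear i) as [Hla Hls].
  specialize (Hx i Hi). specialize (Hy i Hi).
  rewrite Hla, !Hls. rewrite linear0 in * by auto. rewrite Rminus_0_r in *.
  eapply Rle_lt_trans; [apply Rabs_triang|]. rewrite !Rabs_mult.
  rewrite (Rabs_pos_eq t), (Rabs_pos_eq (1 - t)) by lra.
  destruct (Req_dec t 0) as [->|H0]; [nra|].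
  assert (t * Rabs (phi i x) < t * e) by (apply Rmult_lt_compat_l; lra).
  assert ((1 - t) * Rabs (phi i y) <= (1 - t) * e) by (apply Rmult_le_compat_l; lra).
  lra.
Qed.

Lemma initial_linear_lc : lc_topology E tau.
Proof.
split; [apply initial_topology|]. split; [exact initial_linear_hausdorff|].
split; [exact initial_linear_add_continuous|].
split; [exact initial_linear_scal_continuous|exact initial_linear_convex_nbhd].
Qed.

End InitialLinear.

(** * Initial topologies of countably many real functions *)

Section CountableInitial.
Variable X : Type.
Variable phi : nat -> X -> R.
Notation tau := (initial_open nat X phi).

Definition in_grid_box (c : list grid) (x : X) :=
  forall i, (i < length c)%nat ->
    let q := nth i c (0, 0, 0)%nat in Rabs (phi i x - grid_val q) <= / (INR (snd q) + 1).

Lemma countable_initial_separable (x0 : X) : separable X tau.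
Proof.
destruct SetTheory.enum_grid_lists as [dec Hdec].
exists (fun n => epsilon (inhabits x0) (in_grid_box (dec n))).
intros U HU [x Ux]. destruct (HU x Ux) as [l [e [He K]]].
destruct (exists_small_ratio 2 e He) as [m Hm].
set (c := map (fun i => grid_approx (phi i x) m) (seq 0 (S (list_max l)))).
destruct (Hdec c) as [n Hn]. exists n. rewrite Hn.
assert (Hx : in_grid_box c x).
{ intros i Hi. unfold c in *. rewrite length_map, length_seq in Hi.
  rewrite nth_map_seq by auto. rewrite Rabs_minus_sym. apply grid_approx_spec. }
assert (Hd := epsilon_spec (inhabits x0) (in_grid_box c) (ex_intro _ x Hx)).
set (d := epsilon (inhabits x0) (in_grid_box c)) in *.
apply K. intros i Hi.
assert (Hlen : (i < length c)%nat).
{ unfold c. rewrite length_map, length_seq. apply Nat.lt_succ_r, in_list_max; auto. }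
specialize (Hd i Hlen). specialize (Hx i Hlen). cbv zeta in Hd, Hx.
assert (Hm' : snd (nth i c (0, 0, 0)%nat) = m).
{ unfold c. rewrite nth_map_seq; [reflexivity|]. unfold c in Hlen.
  rewrite length_map, length_seq in Hlen. exact Hlen. }
rewrite Hm' in Hd, Hx.
set (q := grid_val (nth i c (0, 0, 0)%nat)) in *.
replace (phi i d - phi i x) with ((phi i d - q) - (phi i x - q)) by ring.
eapply Rle_lt_trans; [apply Rabs_triang|]. rewrite Rabs_Ropp.
replace (2 / (INR m + 1)) with (/ (INR m + 1) + / (INR m + 1)) in Hm
  by (field; generalize (pos_INR m); lra).
lra.
Qed.

Hypothesis phi_sep : forall x y, (forall k, phi k x = phi k y) -> x = y.

Definition trunc_gap k x y := Rmin (/ (INR k + 1)) (Rabs (phi k x - phi k y)).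

Lemma trunc_gap_le1 k x y : trunc_gap k x y <= 1.
Proof.
unfold trunc_gap. eapply Rle_trans; [apply Rmin_l|].
assert (1 <= INR k + 1) by (generalize (pos_INR k); lra).
rewrite <- Rinv_1. apply Rinv_le_contravar; lra.
Qed.

Lemma trunc_gap_ge0 k x y : 0 <= trunc_gap k x y.
Proof. unfold trunc_gap. apply Rmin_glb; [apply Rlt_le, RinvN_pos|apply Rabs_pos]. Qed.

Lemma trunc_gap_sym k x y : trunc_gap k x y = trunc_gap k y x.
Proof. unfold trunc_gap. rewrite Rabs_minus_sym. auto. Qed.

Lemma trunc_gap_triangle k x y z : trunc_gap k x z <= trunc_gap k x y + trunc_gap k y z.
Proof.
unfold trunc_gap. assert (Hc := RinvN_pos k).
assert (T : Rabs (phi k x - phi k z) <= Rabs (phi k x - phi k y) + Rabs (phi k y - phi k z)).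
{ replace (phi k x - phi k z) with ((phi k x - phi k y) + (phi k y - phi k z)) by ring.
  apply Rabs_triang. }
generalize (Rabs_pos (phi k x - phi k y)) (Rabs_pos (phi k y - phi k z)).
unfold Rmin. repeat destruct Rle_dec; lra.
Qed.

Definition sup_dist (x y : X) : R.
Proof.
refine (proj1_sig (completeness (fun v => exists k, v = trunc_gap k x y) _ _)).
- exists 1. intros v [k ->]. apply trunc_gap_le1.
- exists (trunc_gap 0 x y), 0%nat. auto.
Defined.

Lemma sup_dist_lub x y : is_lub (fun v => exists k, v = trunc_gap k x y) (sup_dist x y).
Proof. unfold sup_dist. apply (proj2_sig (completeness _ _ _)). Qed.

Lemma trunc_gap_le_sup_dist x y k : trunc_gap k x y <= sup_dist x y.
Proof. apply (proj1 (sup_dist_lub x y)). exists k; auto. Qed.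

Lemma sup_dist_le x y b : (forall k, trunc_gap k x y <= b) -> sup_dist x y <= b.
Proof. intro H. apply (proj2 (sup_dist_lub x y)). intros v [k ->]. auto. Qed.

Lemma sup_dist_metric : is_metric X sup_dist.
Proof.
split; [|split].
- intros x y. split.
  + intro H. apply phi_sep. intro k.
    assert (H1 := trunc_gap_le_sup_dist x y k). rewrite H in H1.
    assert (H2 := trunc_gap_ge0 k x y). assert (Hk := RinvN_pos k).
    unfold trunc_gap, Rmin in *. destruct Rle_dec; [lra|].
    destruct (Req_dec (phi k x) (phi k y)) as [|Hne]; auto.
    assert (Habs := Rabs_pos_lt (phi k x - phi k y) ltac:(lra)). lra.
  + intros <-. apply Rle_antisym.
    * apply sup_dist_le. intro k. unfold trunc_gap. rewrite Rminus_diag, Rabs_R0. apply Rmin_r.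
    * eapply Rle_trans; [apply (trunc_gap_ge0 0)|apply trunc_gap_le_sup_dist].
- intros x y. apply Rle_antisym; apply sup_dist_le; intro k; rewrite trunc_gap_sym;
    apply trunc_gap_le_sup_dist.
- intros x y z. apply sup_dist_le. intro k. eapply Rle_trans; [apply trunc_gap_triangle|].
  apply Rplus_le_compat; apply trunc_gap_le_sup_dist.
Qed.

(* Basic neighbourhoods only involve finitely many phi i, whose truncation
   levels are bounded below; conversely the terms with k >= m are below 1/(m+1). *)
Lemma countable_initial_metrizable : metrizable X tau.
Proof.
exists sup_dist. split; [apply sup_dist_metric|]. intro U. split.
- intros HU x Ux. destruct (HU x Ux) as [l [e [He K]]].
  set (M := list_max l).
  exists (Rmin e (/ (INR M + 1))). split; [apply Rmin_pos; auto; apply RinvN_pos|].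
  intros y Hy. apply K. intros i Hi.
  assert (H1 := trunc_gap_le_sup_dist x y i).
  assert (Hle : / (INR M + 1) <= / (INR i + 1)).
  { apply Rinv_le_contravar; [generalize (pos_INR i); lra|].
    apply Rplus_le_compat_r, le_INR, in_list_max; auto. }
  assert (H2 := Rmin_l e (/ (INR M + 1))). assert (H3 := Rmin_r e (/ (INR M + 1))).
  unfold trunc_gap, Rmin at 1 in H1. destruct Rle_dec in H1; [lra|].
  rewrite Rabs_minus_sym. lra.
- intros Hb x Ux. destruct (Hb x Ux) as [eps [Heps K]].
  destruct (exists_small_ratio 1 (eps / 2)) as [m Hm]; [lra|].
  exists (seq 0 m), (eps / 2). split; [lra|].
  intros y Hy. apply K.
  assert (sup_dist x y <= eps / 2); [|lra].
  apply sup_dist_le. intro k. unfold trunc_gap.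
  destruct (Nat.lt_ge_cases k m) as [Hk|Hk].
  + eapply Rle_trans; [apply Rmin_r|]. rewrite Rabs_minus_sym.
    left. apply Hy. apply in_seq. lia.
  + eapply Rle_trans; [apply Rmin_l|]. left. eapply Rle_lt_trans; [|apply Hm].
    unfold Rdiv. rewrite Rmult_1_l. apply Rinv_le_contravar; [generalize (pos_INR m); lra|].
    apply Rplus_le_compat_r, le_INR; auto.
Qed.

End CountableInitial.

(** * The cardinality of the continuum *)

Lemma exists_least_nat (P : nat -> Prop) : (exists n, P n) ->
  exists m, P m /\ forall k, (k < m)%nat -> ~ P k.
Proof.
intros [n Hn]. induction n as [n IH] using (well_founded_induction lt_wf).
destruct (classic (exists k, (k < n)%nat /\ P k)) as [[k [Hk Pk]]|H].
- apply (IH k Hk Pk).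
- exists n. split; auto. intros k Hk Pk. apply H. exists k; auto.
Qed.

(* Bit sequences are coded in base 3 with digits 0 and 1, so that the first
   differing bit decides the order of the codes. *)
Definition weight3 (k : nat) := (/ 3) ^ k.

Fixpoint bits_partial (s : nat -> bool) (n : nat) : R :=
  match n with
  | O => 0
  | S n => bits_partial s n + (if s n then weight3 n else 0)
  end.

Lemma weight3_pos k : 0 < weight3 k.
Proof. apply pow_lt. lra. Qed.

Lemma weight3_S k : weight3 (S k) = weight3 k / 3.
Proof. unfold weight3. simpl. field. Qed.

Lemma bits_partial_bound s n : bits_partial s n <= 3 / 2 - 3 / 2 * weight3 n.
Proof.
induction n as [|n IH]; simpl.
- unfold weight3. simpl. lra.
- rewrite weight3_S. assert (H := weight3_pos n). destruct (s n); lra.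
Qed.

Lemma bits_partial_mono s n j : bits_partial s n <= bits_partial s (n + j)%nat.
Proof.
induction j as [|j IH].
- rewrite Nat.add_0_r. lra.
- rewrite Nat.add_succ_r. simpl. assert (H := weight3_pos (n + j)%nat).
  destruct (s (n + j)%nat); lra.
Qed.

Lemma bits_partial_tail s m j :
  bits_partial s (S m + j)%nat <= bits_partial s (S m) + weight3 m / 2 - weight3 (m + j)%nat / 2.
Proof.
induction j as [|j IH].
- rewrite !Nat.add_0_r. lra.
- replace (S m + S j)%nat with (S (S m + j)) by lia.
  replace (m + S j)%nat with (S (m + j)) by lia.
  change (bits_partial s (S (S m + j))) with
    (bits_partial s (S m + j) + (if s (S m + j)%nat then weight3 (S m + j) else 0)).
  change (S m + j)%nat with (S (m + j)) in *.
  rewrite weight3_S. assert (H := weight3_pos (m + j)%nat).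
  destruct (s (S (m + j))); lra.
Qed.

Lemma bits_partial_agree s t n : (forall k, (k < n)%nat -> s k = t k) ->
  bits_partial s n = bits_partial t n.
Proof.
induction n as [|n IH]; intros H; simpl; auto.
rewrite IH by (intros; apply H; lia). rewrite H by lia. auto.
Qed.

Definition bits_value (s : nat -> bool) : R.
Proof.
refine (proj1_sig (completeness (fun v => exists n, v = bits_partial s n) _ _)).
- exists (3 / 2). intros v [n ->]. generalize (bits_partial_bound s n) (weight3_pos n). lra.
- exists 0, 0%nat. auto.
Defined.

Lemma bits_value_lub s : is_lub (fun v => exists n, v = bits_partial s n) (bits_value s).
Proof. unfold bits_value. apply (proj2_sig (completeness _ _ _)). Qed.

Lemma bits_value_lt s t m : (forall k, (k < m)%nat -> s k = t k) ->
  s m = true -> t m = false -> bits_value t < bits_value s.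
Proof.
intros Hag Hs Ht.
assert (HP : bits_partial s m = bits_partial t m) by (apply bits_partial_agree; auto).
assert (H1 : bits_partial s (S m) <= bits_value s).
{ apply (proj1 (bits_value_lub s)). exists (S m); auto. }
assert (H2 : bits_value t <= bits_partial t m + weight3 m / 2).
{ apply (proj2 (bits_value_lub t)). intros v [n ->].
  destruct (Nat.le_gt_cases n m) as [Hn|Hn].
  - replace m with (n + (m - n))%nat by lia.
    generalize (bits_partial_mono t n (m - n)%nat) (weight3_pos (n + (m - n))%nat). lra.
  - replace n with (S m + (n - S m))%nat by lia.
    generalize (bits_partial_tail t m (n - S m)%nat) (weight3_pos (m + (n - S m))%nat).
    simpl bits_partial at 2. rewrite Ht. lra. }
simpl in H1. rewrite Hs in H1. assert (H := weight3_pos m). lra.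
Qed.

Lemma bits_value_inj s t : bits_value s = bits_value t -> s = t.
Proof.
intro H. apply functional_extensionality. intro n0. apply NNPP. intro Hne.
destruct (exists_least_nat (fun n => s n <> t n) (ex_intro _ n0 Hne)) as [m [Hm Hlt]].
assert (Hag : forall k, (k < m)%nat -> s k = t k) by (intros k Hk; apply NNPP, Hlt; auto).
destruct (s m) eqn:Es; destruct (t m) eqn:Et; try congruence.
- assert (bits_value t < bits_value s) by (apply (bits_value_lt s t m); auto). lra.
- assert (bits_value s < bits_value t).
  { apply (bits_value_lt t s m); auto. intros; symmetry; auto. }
  lra.
Qed.

(* A real number is determined by the set of grid points below it. *)
Lemma exists_injection_real_bits :
  exists f : R -> nat -> bool, forall r s, f r = f s -> r = s.
Proof.
destruct SetTheory.enum_grid as [dq Hdq].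
exists (fun r n => if Rlt_dec (grid_val (dq n)) r then true else false).
assert (Hlt : forall r s, r < s ->
  (fun n => if Rlt_dec (grid_val (dq n)) r then true else false) <>
  (fun n => if Rlt_dec (grid_val (dq n)) s then true else false)).
{ intros r s Hrs Heq.
  destruct (exists_small_ratio 2 (s - r)) as [m Hm]; [lra|].
  destruct (Hdq (grid_approx ((r + s) / 2) m)) as [n Hn].
  assert (Ha := grid_approx_spec ((r + s) / 2) m). rewrite <- Hn in Ha.
  assert (Hm1 : 0 < INR m + 1) by (generalize (pos_INR m); lra).
  replace (2 / (INR m + 1)) with (2 * / (INR m + 1)) in Hm by (unfold Rdiv; ring).
  assert (Ha1 := Rle_abs (grid_val (dq n) - (r + s) / 2)).
  assert (Ha2 := Rle_abs (- (grid_val (dq n) - (r + s) / 2))). rewrite Rabs_Ropp in Ha2.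
  assert (E1 := f_equal (fun f => f n) Heq). cbv beta in E1.
  destruct (Rlt_dec (grid_val (dq n)) r); destruct (Rlt_dec (grid_val (dq n)) s);
    try discriminate; lra. }
intros r s H. destruct (Rtotal_order r s) as [H1|[H1|H1]]; auto.
- exfalso. apply (Hlt r s H1 H).
- exfalso. apply (Hlt s r H1). auto.
Qed.

Lemma exists_injection_seq_real :
  exists f : (nat -> R) -> R, forall u v, f u = f v -> u = v.
Proof.
destruct exists_injection_real_bits as [b Hb].
exists (fun u => bits_value (fun n => b (u (fst (of_nat n))) (snd (of_nat n)))).
intros u v H. apply bits_value_inj in H.
apply functional_extensionality. intro k. apply Hb.
apply functional_extensionality. intro j.
assert (E1 := f_equal (fun f => f (to_nat (k, j))) H). cbv beta in E1.
rewrite cancel_of_to in E1. exact E1.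
Qed.

Lemma bijection_R_of_separating_seq (X : Type) (phi : nat -> X -> R) (g : R -> X) :
  (forall x y, (forall k, phi k x = phi k y) -> x = y) ->
  (forall r s, g r = g s -> r = s) ->
  exists f : X -> R, (forall x y, f x = f y -> x = y) /\ (forall r, exists x, f x = r).
Proof.
intros phi_sep g_inj. destruct exists_injection_seq_real as [h Hh].
apply (SetTheory.cantor_bernstein_R X (fun x => h (fun k => phi k x)) g); auto.
intros x y H. apply phi_sep. intro k. apply (f_equal (fun u => u k) (Hh _ _ H)).
Qed.

(** * Separability of the weak-star dual *)

Lemma list_upper_bound {A : Type} (f : A -> R) (l : list A) :
  exists M, forall x, In x l -> f x <= M.
Proof.
induction l as [|a l [M HM]].
- exists 0. intros x [].
- exists (Rmax (f a) M). intros x [<-|Hx]; [apply Rmax_l|].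
  eapply Rle_trans; [apply HM; auto|apply Rmax_r].
Qed.

Section LinearCombinations.
Variable E : vspace.
Notation "0v" := (vzero E).
Notation "x +v y" := (vadd E x y) (at level 50, left associativity).
Notation "a *v x" := (vscal E a x) (at level 40).
Variable phi : nat -> E -> R.
Hypothesis phi_linear : forall k, Defs.linear E (phi k).
Hypothesis phi_sep : forall x y, (forall k, phi k x = phi k y) -> x = y.

Fixpoint lincomb (hs : list (R * nat)) (x : E) : R :=
  match hs with nil => 0 | p :: hs => fst p * phi (snd p) x + lincomb hs x end.

Lemma lincomb_linear hs : Defs.linear E (lincomb hs).
Proof.
induction hs as [|p hs [IHa IHs]]; split; intros; simpl; try ring.
- rewrite IHa, (proj1 (phi_linear (snd p))). ring.
- rewrite IHs, (proj2 (phi_linear (snd p))). ring.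
Qed.

Lemma lincomb_cat h1 h2 x : lincomb (h1 ++ h2) x = lincomb h1 x + lincomb h2 x.
Proof. induction h1 as [|p h1 IH]; simpl; [ring|rewrite IH; ring]. Qed.

Definition lincomb_scale (a : R) (hs : list (R * nat)) :=
  map (fun p => (a * fst p, snd p)) hs.

Lemma lincombZ a hs x : lincomb (lincomb_scale a hs) x = a * lincomb hs x.
Proof. induction hs as [|p hs IH]; simpl; [ring|rewrite IH; ring]. Qed.

Fixpoint in_span (l : list E) (x : E) : Prop :=
  match l with nil => x = 0v | y :: l => exists c, in_span l (x +v (- c) *v y) end.

Lemma linear_eq_on_span F G l : Defs.linear E F -> Defs.linear E G ->
  (forall y, In y l -> F y = G y) -> forall x, in_span l x -> F x = G x.
Proof.
intros HF HG. induction l as [|y l IH]; intros Hl x Hx; simpl in Hx.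
- subst x. rewrite (linear0 E F HF), (linear0 E G HG). reflexivity.
- destruct Hx as [c Hc]. assert (H := IH (fun z Hz => Hl z (or_intror Hz)) _ Hc).
  rewrite (proj1 HF), (proj1 HG), (proj2 HF), (proj2 HG), (Hl y (or_introl eq_refl)) in H.
  lra.
Qed.

Lemma span_or_lincomb_witness l : forall x, in_span l x \/
  exists hs, (forall y, In y l -> lincomb hs y = 0) /\ lincomb hs x = 1.
Proof.
induction l as [|y l IH]; intros x.
- destruct (classic (x = 0v)) as [H|H]; [left; auto|right].
  assert (Hk : exists k, phi k x <> 0).
  { apply NNPP. intro Hn. apply H, phi_sep. intro k.
    rewrite linear0 by apply phi_linear. apply NNPP. intro H'. apply Hn. exists k; auto. }
  destruct Hk as [k Hk]. exists ((/ phi k x, k) :: nil). split.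
  + intros y [].
  + simpl. field. auto.
- destruct (IH y) as [Hy|[k [Hk0 Hk1]]].
  + destruct (IH x) as [Hx|[h [Hh0 Hh1]]].
    * left. exists 0. rewrite Ropp_0, vscal0l, vadd0. auto.
    * right. exists h. split; auto. intros z [<-|Hz]; auto.
      apply (linear_eq_on_span (lincomb h) (fun _ => 0) l (lincomb_linear h)); auto.
      split; intros; ring.
  + set (u := x +v (- lincomb k x) *v y).
    destruct (IH u) as [Hu|[h [Hh0 Hh1]]].
    * left. exists (lincomb k x). exact Hu.
    * right. exists (h ++ lincomb_scale (- lincomb h y) k). split.
      -- intros z [<-|Hz]; rewrite lincomb_cat, lincombZ.
         ++ rewrite Hk1. ring.
         ++ rewrite Hh0, Hk0 by auto. ring.
      -- rewrite lincomb_cat, lincombZ. unfold u in Hh1.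
         rewrite (proj1 (lincomb_linear h)), (proj2 (lincomb_linear h)) in Hh1. lra.
Qed.

Lemma lincomb_interpolates (g : E -> R) : Defs.linear E g -> forall l,
  exists hs, forall x, In x l -> lincomb hs x = g x.
Proof.
intros Hg l. induction l as [|x l [hs Hhs]].
- exists nil. intros x [].
- destruct (span_or_lincomb_witness l x) as [Hx|[h [Hh0 Hh1]]].
  + exists hs. intros z [<-|Hz]; auto.
    apply (linear_eq_on_span (lincomb hs) g l (lincomb_linear hs) Hg); auto.
  + exists (hs ++ lincomb_scale (g x - lincomb hs x) h).
    intros z [<-|Hz]; rewrite lincomb_cat, lincombZ.
    * rewrite Hh1. ring.
    * rewrite Hh0, Hhs by auto. ring.
Qed.

Definition round_coeffs (m : nat) (hs : list (R * nat)) : list (grid * nat) :=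
  map (fun p => (grid_approx (fst p) m, snd p)) hs.

Definition grid_coeffs (c : list (grid * nat)) : list (R * nat) :=
  map (fun p => (grid_val (fst p), snd p)) c.

Fixpoint abs_weight (hs : list (R * nat)) (x : E) : R :=
  match hs with nil => 0 | p :: hs => Rabs (phi (snd p) x) + abs_weight hs x end.

Lemma lincomb_round_error m hs x :
  Rabs (lincomb hs x - lincomb (grid_coeffs (round_coeffs m hs)) x)
    <= / (INR m + 1) * abs_weight hs x.
Proof.
induction hs as [|p hs IH]; simpl.
- rewrite Rminus_diag, Rabs_R0. lra.
- set (q := grid_val (grid_approx (fst p) m)).
  replace (fst p * phi (snd p) x + lincomb hs x -
           (q * phi (snd p) x + lincomb (grid_coeffs (round_coeffs m hs)) x))
    with ((fst p - q) * phi (snd p) x +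
          (lincomb hs x - lincomb (grid_coeffs (round_coeffs m hs)) x)) by ring.
  eapply Rle_trans; [apply Rabs_triang|]. rewrite Rabs_mult.
  assert (H1 := grid_approx_spec (fst p) m). fold q in H1. rewrite Rabs_minus_sym in H1.
  assert (Rabs (fst p - q) * Rabs (phi (snd p) x) <= / (INR m + 1) * Rabs (phi (snd p) x))
    by (apply Rmult_le_compat_r; auto using Rabs_pos).
  lra.
Qed.

End LinearCombinations.

Section WeakStarSeparable.
Variable E : vspace.
Variable openE : (E -> Prop) -> Prop.
Hypothesis HE : lc_topology E openE.
Variable phi : nat -> dual E openE.
Hypothesis phi_sep : forall x y, (forall k, proj1_sig (phi k) x = proj1_sig (phi k) y) -> x = y.
Notation ph := (fun k => proj1_sig (phi k)).

Lemma ph_linear k : Defs.linear E (ph k).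
Proof. exact (proj1 (proj2_sig (phi k))). Qed.

Lemma continuous_comb c f g : Defs.continuous E openE f -> Defs.continuous E openE g ->
  Defs.continuous E openE (fun x => c * f x + g x).
Proof.
intros Hf Hg x eps He.
set (d := eps / (2 * (Rabs c + 1))).
assert (Hc : 0 < Rabs c + 1) by (generalize (Rabs_pos c); lra).
assert (Hd : 0 < d) by (apply Rdiv_lt_0_compat; lra).
destruct (Hf x d Hd) as [U1 [HU1 [U1x K1]]].
destruct (Hg x (eps / 2) ltac:(lra)) as [U2 [HU2 [U2x K2]]].
exists (fun y => U1 y /\ U2 y). repeat split; auto.
- apply (proj1 (proj2 (proj1 HE))); auto.
- intros y [Hy1 Hy2]. specialize (K1 y Hy1). specialize (K2 y Hy2).
  replace (c * f y + g y - (c * f x + g x)) with (c * (f y - f x) + (g y - g x)) by ring.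
  eapply Rle_lt_trans; [apply Rabs_triang|]. rewrite Rabs_mult.
  assert (Rabs c * Rabs (f y - f x) <= Rabs c * d)
    by (apply Rmult_le_compat_l; auto using Rabs_pos; lra).
  assert (Rabs c * d <= eps / 2).
  { unfold d. apply Rle_trans with ((Rabs c + 1) * (eps / (2 * (Rabs c + 1)))).
    - apply Rmult_le_compat_r; [apply Rlt_le; exact Hd|lra].
    - right. field. lra. }
  lra.
Qed.

Lemma lincomb_continuous hs : Defs.continuous E openE (lincomb E ph hs).
Proof.
induction hs as [|p hs IH].
- intros x eps He. exists (fun _ => True). repeat split; auto.
  + exact (proj1 (proj1 HE)).
  + intros y _. simpl. rewrite Rminus_diag, Rabs_R0; auto.
- apply (continuous_comb (fst p) (ph (snd p))); auto. exact (proj2 (proj2_sig (phi (snd p)))).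
Qed.

Definition lincomb_dual (hs : list (R * nat)) : dual E openE :=
  exist _ (lincomb E ph hs) (conj (lincomb_linear E ph ph_linear hs) (lincomb_continuous hs)).

Lemma weakstar_separable : separable (dual E openE) (weakstar_open E openE).
Proof.
destruct SetTheory.enum_indexed_grid_lists as [dec Hdec].
exists (fun n => lincomb_dual (grid_coeffs (dec n))).
intros W HW [g Wg]. destruct (HW g Wg) as [l [e [He K]]].
destruct (lincomb_interpolates E ph ph_linear phi_sep (proj1_sig g) (proj1 (proj2_sig g)) l)
  as [hs Hhs].
destruct (list_upper_bound (abs_weight E ph hs) l) as [M HM].
destruct (exists_small_ratio (Rabs M) e He) as [m Hm].
destruct (Hdec (round_coeffs m hs)) as [n Hn]. exists n. rewrite Hn.
apply K. intros x Hx. simpl. rewrite <- (Hhs x Hx), Rabs_minus_sym.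
eapply Rle_lt_trans; [apply lincomb_round_error|].
eapply Rle_lt_trans; [|apply Hm].
assert (Hm1 : 0 < / (INR m + 1)) by (apply Rinv_0_lt_compat; generalize (pos_INR m); lra).
unfold Rdiv. rewrite (Rmult_comm (Rabs M)). apply Rmult_le_compat_l; [lra|].
eapply Rle_trans; [apply HM; auto|apply Rle_abs].
Qed.

End WeakStarSeparable.

Lemma initial_open_reindex (I J X : Type) (F : J -> X -> R) (s : I -> J) (U : X -> Prop) :
  initial_open I X (fun i => F (s i)) U -> initial_open J X F U.
Proof.
intros HU x Ux. destruct (HU x Ux) as [l [e [He K]]].
exists (map s l), e. split; auto. intros y Hy. apply K. intros i Hi.
apply Hy, in_map; auto.
Qed.

Theorem proposition3p4 (E : vspace) (openE : (E -> Prop) -> Prop)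
  (HE : lc_topology E openE)
  (Hnontriv : exists x : E, x <> vzero E)
  (Hsig : sigma_space E (weak_open E openE)) :
  (exists tau : (E -> Prop) -> Prop,
     lc_topology E tau /\
     (forall U, tau U -> weak_open E openE U) /\
     separable E tau /\ metrizable E tau) /\
  (countable_pseudocharacter E (weak_open E openE) /\
   exists f : E -> R, (forall x y, f x = f y -> x = y) /\
                      (forall r, exists x, f x = r)) /\
  separable (dual E openE) (weakstar_open E openE).
Proof.
destruct (separating_dual_sequence E openE HE Hsig) as [phi phi_sep].
set (ph := fun k => proj1_sig (phi k)).
assert (ph_linear : forall k, Defs.linear E (ph k)) by (intro k; exact (proj1 (proj2_sig (phi k)))).
destruct Hnontriv as [x0 Hx0].
split; [|split; [split|]].
- exists (initial_open nat E ph). split; [|split; [|split]].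
  + apply (initial_linear_lc E nat ph); auto.
  + intros U. apply (initial_open_reindex nat (dual E openE) E (fun f x => proj1_sig f x) phi).
  + apply countable_initial_separable, x0.
  + apply countable_initial_metrizable; auto.
- apply weak_countable_pseudocharacter; auto.
- apply (bijection_R_of_separating_seq E ph (fun t => vscal E t x0)); auto.
  intros r s. apply vscal_injl, Hx0.
- exact (weakstar_separable E openE HE phi phi_sep).
Qed.
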